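(* Let $\mathcal{A}\in\mathbb{C}^{I_{1\ldots N}\times I_{1\ldots N}}$ satisfy $W(\mathcal{A})=W(\mathcal{A}^H)$, and let $\mathcal{M}=\mathcal{N}=\beta\mathcal{I}\in\mathbb{C}^{I_{1\ldots N}\times I_{1\ldots N}}$ be Hermitian positive definite tensors ($\beta$ a scalar, $\mathcal{I}$ the identity tensor). Then $W(\mathcal{A})\cap\mu^2W(\mathcal{A}^{\dagger}_{\mathcal{M},\mathcal{N}})\neq\emptyset$ for every $(\mathcal{M},\mathcal{N})$ singular value $\mu$ of $\mathcal{A}$.
   Context: Write $I_{1\ldots N}$ for $I_1\times\cdots\times I_N$. Einstein product: $(\mathcal{A}*_N\mathcal{B})_{i_1\ldots i_Nj_1\ldots j_L}=\sum_{k_1,\ldots,k_N}a_{i_1\ldots i_Nk_1\ldots k_N}b_{k_1\ldots k_Nj_1\ldots j_L}$ (also when $\mathcal{B}\in\mathbb{C}^{I_{1\ldots N}}$). $\mathcal{A}^H$ is the conjugate transpose; the identity tensor $\mathcal{I}$ has entry 1 where the two index blocks coincide, 0 elsewhere. $\langle\mathcal{X},\mathcal{Y}\rangle=\mathcal{Y}^H*_N\mathcal{X}$, $\|\mathcal{X}\|=\langle\mathcal{X},\mathcal{X}\rangle^{1/2}$. A tensor $\mathcal{M}$ is Hermitian positive definite if $\mathcal{M}^H=\mathcal{M}$ and $\langle\mathcal{M}*_N\mathcal{X},\mathcal{X}\rangle>0$ for nonzero $\mathcal{X}$. Numerical range: $W(\mathcal{A})=\{\langle\mathcal{A}*_N\mathcal{X},\mathcal{X}\rangle:\|\mathcal{X}\|=1\}$;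 $\mu^2W=\{\mu^2z:z\in W\}$. Weighted Moore-Penrose inverse $\mathcal{A}^{\dagger}_{\mathcal{M},\mathcal{N}}$: the unique $\mathcal{X}$ with $\mathcal{A}*_N\mathcal{X}*_N\mathcal{A}=\mathcal{A}$, $\mathcal{X}*_N\mathcal{A}*_N\mathcal{X}=\mathcal{X}$, $(\mathcal{M}*_N\mathcal{A}*_N\mathcal{X})^H=\mathcal{M}*_N\mathcal{A}*_N\mathcal{X}$, $(\mathcal{N}*_N\mathcal{X}*_N\mathcal{A})^H=\mathcal{N}*_N\mathcal{X}*_N\mathcal{A}$. $(\mathcal{M},\mathcal{N})$ singular values: writing $\mathcal{A}=\mathcal{U}*_N\mathcal{S}*_N\mathcal{V}^H$ with $\mathcal{U}^H*_N\mathcal{M}*_N\mathcal{U}=\mathcal{I}$, $\mathcal{V}^H*_N\mathcal{N}^{-1}*_N\mathcal{V}=\mathcal{I}$ and $\mathcal{S}$ a real tensor whose only nonzero entries are positive numbers at positions with equal linear indices $I=J\le r$ ($r$ the rank of the reshaped $(I_1\cdots I_N)\times(I_1\cdots I_N)$ matrix of $\mathcal{A}$), these positive numbers are the $(\mathcal{M},\mathcal{N})$ singular values; equivalently, the nonzero singular values of $\mathcal{M}^{1/2}*_N\mathcal{A}*_N\mathcal{N}^{-1/2}$. *)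

From HB Require Import structures.
From mathcomp Require Import all_boot all_order all_algebra.
From mathcomp Require Import reals.
From mathcomp Require Import complex.
Set Implicit Arguments. Unset Strict Implicit. Unset Printing Implicit Defensive.
Import Order.TTheory GRing.Theory Num.Theory.
Local Open Scope ring_scope.

Section Tensors.
Variable C : numClosedFieldType.
Variable n : nat.
Variable I : 'I_n -> nat.

Definition mindex := {dffun forall k : 'I_n, 'I_(I k)}.

Definition tensor := mindex -> mindex -> C.
Definition vtensor := mindex -> C.

Definition tmul (A B : tensor) : tensor :=
  fun i j => \sum_(k : mindex) A i k * B k j.
Definition tapp (A : tensor) (X : vtensor) : vtensor :=
  fun i => \sum_(k : mindex) A i k * X k.
Definition tH (A : tensor) : tensor := fun i j => (A j i)^*.
Definition tI : tensor := fun i j => (i == j)%:R.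
Definition tscale (b : C) (A : tensor) : tensor := fun i j => b * A i j.
Definition tinner (X Y : vtensor) : C := \sum_(i : mindex) (Y i)^* * X i.
Definition tnorm (X : vtensor) : C := sqrtC (tinner X X).

Definition numrange (A : tensor) : C -> Prop :=
  fun z => exists X : vtensor, tnorm X = 1 /\ z = tinner (tapp A X) X.

Definition hpd (M : tensor) : Prop :=
  tH M = M /\ forall X : vtensor, X <> (fun _ => 0) -> 0 < tinner (tapp M X) X.

Definition is_wmp_inv (M Nt A X : tensor) : Prop :=
  [/\ tmul (tmul A X) A = A, tmul (tmul X A) X = X,
      tH (tmul M (tmul A X)) = tmul M (tmul A X)
    & tH (tmul Nt (tmul X A)) = tmul Nt (tmul X A)].

Definition is_MN_singval (M Nt A : tensor) (mu : C) : Prop :=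
  exists (U V S Ninv : tensor),
    tmul Nt Ninv = tI /\ tmul Ninv Nt = tI /\
    tmul (tH U) (tmul M U) = tI /\
    tmul (tH V) (tmul Ninv V) = tI /\
    A = tmul U (tmul S (tH V)) /\
    (forall i j, i != j -> S i j = 0) /\
    (forall i, 0 <= S i i) /\
    (exists i, S i i = mu /\ 0 < mu).

End Tensors.

From HB Require Import structures.
From mathcomp Require Import all_boot all_order all_algebra.
From mathcomp Require Import reals.
From mathcomp Require Import complex.
From mathcomp Require Import boolp.
Import Order.TTheory GRing.Theory Num.Theory.
Local Open Scope ring_scope.
Set Implicit Arguments. Unset Strict Implicit. Unset Printing Implicit Defensive.

(* With M = N = beta I the weights only rescale: the (M,N) singular value
   decomposition becomes an ordinary one, and the weighted Moore-Penrose
   inverse X becomes the ordinary one.  A singular value mu then comes with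
   unit vectors u, v such that A v = mu u and A^H u = mu v, and X A A^H = A^H
   gives X u = mu^-1 v.  Hence <A^H v, v> = mu <v, u> and <X u, u> = mu^-1 <v, u>;
   the first number lies in W(A^H) = W(A), the second in W(X). *)

Section TensorAlgebra.
Variables (C : numClosedFieldType) (n : nat) (I : 'I_n -> nat).
Local Notation T := (tensor C I).
Local Notation VT := (vtensor C I).
Local Notation MI := (mindex I).
Local Notation tI := (@tI C n I).
Implicit Types (A B D S U V X : T) (x y : VT) (b c : C) (i j : MI).

Definition vscale c x : VT := fun k => c * x k.
Definition tcol B i : VT := fun k => B k i.
Definition tdiag S := forall i j, i != j -> S i j = 0.

Lemma tensor_ext A B : (forall i j, A i j = B i j) -> A = B.
Proof. by move=> eqAB; apply: funext => i; apply: funext => j; apply: eqAB. Qed.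

Lemma tmulA A B D : tmul (tmul A B) D = tmul A (tmul B D).
Proof.
apply: tensor_ext => i j; rewrite /tmul.
under eq_bigr do rewrite mulr_suml.
rewrite exchange_big; apply: eq_bigr => l _; rewrite mulr_sumr.
by apply: eq_bigr => m _; rewrite mulrA.
Qed.

Lemma tmul1t B : tmul tI B = B.
Proof.
apply: tensor_ext => i j; rewrite /tmul /tI (bigD1 i) //= eqxx mul1r.
by rewrite big1 ?addr0 // => l; rewrite eq_sym => /negbTE ->; rewrite mul0r.
Qed.

Lemma tmul_scalel b A B : tmul (tscale b A) B = tscale b (tmul A B).
Proof.
apply: tensor_ext => i j; rewrite /tmul /tscale mulr_sumr.
by apply: eq_bigr => k _; rewrite mulrA.
Qed.

Lemma tmul_scaler b A B : tmul A (tscale b B) = tscale b (tmul A B).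
Proof.
apply: tensor_ext => i j; rewrite /tmul /tscale mulr_sumr.
by apply: eq_bigr => k _; rewrite mulrCA.
Qed.

Lemma tscaleA b c A : tscale b (tscale c A) = tscale (b * c) A.
Proof. by apply: tensor_ext => i j; rewrite /tscale mulrA. Qed.

Lemma tscale1 A : tscale 1 A = A.
Proof. by apply: tensor_ext => i j; rewrite /tscale mul1r. Qed.

Lemma tscale_inj b A B : b != 0 -> tscale b A = tscale b B -> A = B.
Proof.
move=> b_neq0 eqAB; apply: tensor_ext => i j.
by apply: (mulfI b_neq0); apply: (congr1 (fun F : T => F i j) eqAB).
Qed.

Lemma tHK A : tH (tH A) = A.
Proof. by apply: tensor_ext => i j; rewrite /tH conjCK. Qed.

Lemma tH_tI : tH tI = tI.
Proof. by apply: tensor_ext => i j; rewrite /tH /tI rmorph_nat eq_sym. Qed.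

Lemma tH_mul A B : tH (tmul A B) = tmul (tH B) (tH A).
Proof.
apply: tensor_ext => i j; rewrite /tH /tmul rmorph_sum.
by apply: eq_bigr => k _; rewrite rmorphM mulrC.
Qed.

Lemma tH_scale b A : tH (tscale b A) = tscale b^* (tH A).
Proof. by apply: tensor_ext => i j; rewrite /tH /tscale rmorphM. Qed.

Lemma vscaleA b c x : vscale b (vscale c x) = vscale (b * c) x.
Proof. by apply: funext => k; rewrite /vscale mulrA. Qed.

Lemma vscaleK c x : c != 0 -> vscale c^-1 (vscale c x) = x.
Proof.
by move=> c_neq0; apply: funext => k; rewrite /vscale mulKf.
Qed.

Lemma tapp_mul A B x : tapp (tmul A B) x = tapp A (tapp B x).
Proof.
apply: funext => k; rewrite /tapp /tmul.
under eq_bigr do rewrite mulr_suml.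
rewrite exchange_big; apply: eq_bigr => l _; rewrite mulr_sumr.
by apply: eq_bigr => m _; rewrite mulrA.
Qed.

Lemma tapp_scale A c x : tapp A (vscale c x) = vscale c (tapp A x).
Proof.
apply: funext => k; rewrite /tapp /vscale mulr_sumr.
by apply: eq_bigr => l _; rewrite mulrCA.
Qed.

Lemma tapp_col A B i : tapp A (tcol B i) = tcol (tmul A B) i.
Proof. by []. Qed.

Lemma tapp_tI_col B i : tapp B (tcol tI i) = tcol B i.
Proof.
apply: funext => k; rewrite /tapp /tcol /tI (bigD1 i) //=.
by rewrite eqxx mulr1 big1 ?addr0 // => l /negbTE ->; rewrite mulr0.
Qed.

Lemma tcol_diag S i : tdiag S -> tcol S i = vscale (S i i) (tcol tI i).
Proof.
move=> diagS; apply: funext => k; rewrite /tcol /vscale /tI.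
by case: (eqVneq k i) => [->|neq_ki]; rewrite ?mulr1 // diagS // mulr0.
Qed.

Lemma tdiag_tH S : tdiag S -> tdiag (tH S).
Proof. by move=> diagS i j neq_ij; rewrite /tH diagS 1?eq_sym // rmorph0. Qed.

Lemma tinner_adj A x y : tinner (tapp A x) y = tinner x (tapp (tH A) y).
Proof.
rewrite /tinner /tapp /tH.
under eq_bigr do rewrite mulr_sumr.
rewrite exchange_big; apply: eq_bigr => l _.
rewrite rmorph_sum mulr_suml; apply: eq_bigr => k _.
by rewrite rmorphM /= conjCK mulrA [_ * A k l]mulrC.
Qed.

Lemma tinner_scalel c x y : tinner (vscale c x) y = c * tinner x y.
Proof. by rewrite /tinner /vscale mulr_sumr; apply: eq_bigr => k _; rewrite mulrCA. Qed.

Lemma tinner_scaler c x y : tinner x (vscale c y) = c^* * tinner x y.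
Proof. by rewrite /tinner /vscale mulr_sumr; apply: eq_bigr => k _; rewrite rmorphM mulrA. Qed.

Lemma tinner_col_isometry U i : tmul (tH U) U = tI -> tinner (tcol U i) (tcol U i) = 1.
Proof. by move=> /(congr1 (fun F : T => F i i)); rewrite /tI eqxx. Qed.

Lemma numrange_unit A x : tinner x x = 1 -> numrange A (tinner (tapp A x) x).
Proof. by move=> unit_x; exists x; rewrite /tnorm unit_x sqrtC1. Qed.

Lemma hpd_scale_tI_gt0 b i : hpd (tscale b tI) -> 0 < b.
Proof.
case=> _ /(_ (tcol tI i)) pos_b.
have e_i_unit : tinner (tcol tI i) (tcol tI i) = 1.
  by apply: tinner_col_isometry; rewrite tH_tI tmul1t.
have e_i_neq0 : tcol tI i <> (fun=> 0).
  move/(congr1 (fun x : VT => x i)); rewrite /tcol /tI eqxx.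
  by move/eqP; rewrite oner_eq0.
by move: (pos_b e_i_neq0); rewrite tapp_tI_col -/(vscale b _) tinner_scalel e_i_unit mulr1.
Qed.

Lemma svd_mul_col U S V i :
  tmul (tH V) V = tI -> tdiag S ->
  tapp (tmul U (tmul S (tH V))) (tcol V i) = vscale (S i i) (tcol U i).
Proof.
move=> isoV diagS.
by rewrite !tapp_mul tapp_col isoV tapp_tI_col tcol_diag // tapp_scale tapp_tI_col.
Qed.

Definition singular_pair A mu x y :=
  [/\ tinner x x = 1, tinner y y = 1,
      tapp A y = vscale mu x & tapp (tH A) x = vscale mu y].

Lemma svd_singular_pair U S V i :
  tmul (tH U) U = tI -> tmul (tH V) V = tI -> tdiag S -> (S i i)^* = S i i ->
  singular_pair (tmul U (tmul S (tH V))) (S i i) (tcol U i) (tcol V i).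
Proof.
move=> isoU isoV diagS real_Sii; split; rewrite ?tinner_col_isometry //.
  exact: svd_mul_col.
rewrite !tH_mul tHK tmulA -real_Sii.
exact: svd_mul_col isoU (tdiag_tH diagS).
Qed.

Lemma MN_singval_scale_tI_svd b A mu :
  hpd (tscale b tI) -> is_MN_singval (tscale b tI) (tscale b tI) A mu ->
  0 < mu /\ exists U S V i, [/\ tmul (tH U) U = tI, tmul (tH V) V = tI,
    A = tmul U (tmul S (tH V)), tdiag S & S i i = mu].
Proof.
move=> hpd_b [U [V [S [Ninv [NNinv [_ [isoU [isoV [defA [diagS [_ [i [Sii mu_gt0]]]]]]]]]]]]].
have b_gt0 := hpd_scale_tI_gt0 i hpd_b.
have b_neq0 : b != 0 by rewrite gt_eqF.
rewrite tmul_scalel tmul1t in NNinv.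
have defNinv : Ninv = tscale b^-1 tI by rewrite -NNinv tscaleA mulVf ?tscale1.
rewrite tmul_scalel tmul1t tmul_scaler in isoU.
rewrite defNinv tmul_scalel tmul1t tmul_scaler in isoV.
have [a a_gt0 aa] : exists2 a, 0 < a & a * a = b.
  by exists (sqrtC b); rewrite ?sqrtC_gt0 // -expr2 sqrtCK.
have a_neq0 : a != 0 by rewrite gt_eqF.
have real_a : a^* = a by apply/conj_Creal/ger0_real/ltW.
split=> //; exists (tscale a U), S, (tscale a^-1 V), i; split=> //.
- by rewrite tH_scale tmul_scalel tmul_scaler tscaleA real_a aa.
- by rewrite tH_scale tmul_scalel tmul_scaler tscaleA fmorphV /= real_a -invfM aa.
- by rewrite tH_scale !tmul_scaler tmul_scalel tscaleA fmorphV /= real_a mulVf ?tscale1.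
Qed.

Lemma wmp_inv_scale_tI b A X :
  b^* = b -> b != 0 -> is_wmp_inv (tscale b tI) (tscale b tI) A X ->
  tmul (tmul A X) A = A /\ tH (tmul X A) = tmul X A.
Proof.
move=> real_b b_neq0 [AXA _ _ hermXA]; split=> //.
by rewrite tmul_scalel tmul1t tH_scale real_b in hermXA; apply: tscale_inj hermXA.
Qed.

Lemma mp_inv_mul_tH A X :
  tmul (tmul A X) A = A -> tH (tmul X A) = tmul X A -> tmul (tmul X A) (tH A) = tH A.
Proof. by move=> AXA hermXA; rewrite -{1}hermXA -tH_mul -tmulA AXA. Qed.

Lemma mp_inv_singular_vector A X mu x y :
  tmul (tmul X A) (tH A) = tH A -> tapp A y = vscale mu x ->
  tapp (tH A) x = vscale mu y -> mu != 0 -> tapp X x = vscale mu^-1 y.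
Proof.
move=> XAAH Ay AHx mu_neq0.
have : tapp (tmul (tmul X A) (tH A)) x = tapp (tH A) x by rewrite XAAH.
rewrite !tapp_mul AHx tapp_scale Ay !tapp_scale vscaleA => eq_y.
rewrite -(vscaleK (tapp X x) (mulf_neq0 mu_neq0 mu_neq0)) eq_y vscaleA.
by rewrite invfM -mulrA mulVf ?mulr1.
Qed.

End TensorAlgebra.

Theorem theorem6p10 (R : realType) (n : nat) (I : 'I_n -> nat)
    (A M Nt : tensor R[i] I) (beta : R[i]) :
  (forall z, numrange A z <-> numrange (tH A) z) ->
  M = tscale beta (@tI R[i] n I) -> Nt = tscale beta (@tI R[i] n I) ->
  hpd M -> hpd Nt ->
  forall (Adag : tensor R[i] I), is_wmp_inv M Nt A Adag ->
  forall mu : R[i], is_MN_singval M Nt A mu ->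
  exists z : R[i], numrange A z /\
    exists w : R[i], numrange Adag w /\ z = mu ^+ 2 * w.
Proof.
move=> WA_AH -> -> hpd_beta _ X wmpX mu singval_mu.
have [mu_gt0 [U [S [V [i [isoU isoV defA diagS Sii]]]]]] :=
  MN_singval_scale_tI_svd hpd_beta singval_mu.
have real_mu : mu^* = mu by apply/conj_Creal/ger0_real/ltW.
have mu_neq0 : mu != 0 by rewrite gt_eqF.
have beta_gt0 := hpd_scale_tI_gt0 i hpd_beta.
have real_beta : beta^* = beta by apply/conj_Creal/ger0_real/ltW.
have beta_neq0 : beta != 0 by rewrite gt_eqF.
have [AXA hermXA] := wmp_inv_scale_tI real_beta beta_neq0 wmpX.
have real_Sii : (S i i)^* = S i i by rewrite Sii real_mu.
have [unit_u unit_v Av AHu] := svd_singular_pair isoU isoV diagS real_Sii.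
rewrite -defA Sii in Av AHu.
have Xu := mp_inv_singular_vector (mp_inv_mul_tH AXA hermXA) Av AHu mu_neq0.
exists (tinner (tapp (tH A) (tcol V i)) (tcol V i)).
split; first exact/WA_AH/numrange_unit.
exists (tinner (tapp X (tcol U i)) (tcol U i)); split; first exact: numrange_unit.
rewrite tinner_adj tHK Av Xu tinner_scaler tinner_scalel real_mu.
by rewrite expr2 -mulrA mulVKf.
Qed.
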